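(* Let $\mathcal G=(N,\Sigma,S,P)$ be a normalized spine grammar with spine direction $d$, and let $L_1=\{w\in\mathrm{Next}(\mathcal S(\mathcal G))\mid |w|=1\}$. Then there exists a pop-normalized MPDA $\mathcal A$ with $L(\mathcal A)\cup L_1=\mathrm{Next}(\mathcal S(\mathcal G))$. Moreover, the tree languages $\mathcal F(L(\mathcal A)\cup L_1)_S$ and $T(\mathcal G)$ coincide modulo relabeling, i.e. there is a relabeling $\rho$ with $\rho(\mathcal F(L(\mathcal A)\cup L_1)_S)=T(\mathcal G)$.
   Context: Spine grammar / normalized: $\mathcal G=(N,\Sigma,S,P)$ with $N=N_0\cup N_1$ (nullary/unary nonterminals), terminals $\Sigma=\Sigma_0\cup\Sigma_2$, start $S\in N_0$, productions of the forms $n\to\alpha$, $n\to b(\alpha)$ ($n\in N_0$, $b\in N_1$, $\alpha\in\Sigma_0$), $n\to b_1(b_2(\Box))$ ($b_i\in N_1$), $n\to\sigma(\Box,a)$, $n\to\sigma(a,\Box)$ ($\sigma\in\Sigma_2$, $a\in N_0\setminus\{S\}$), with a spine direction $d:\Sigma_2\to\{1,2\}$ such that in each production $n\to\sigma(\cdot,\cdot)$ containing $\Box$ the hole is in child $d(\sigma)$, and such that for each $n\in N_0$ no tree derivable from $n$ by one step followed by steps with only unary-nonterminal productions contains $n$. A step replaces a nullary nonterminal by a right-hand side, or a subtree $n(t')$ with $n\in N_1$ by the right-hand side with $\Box$ replaced by $t'$; $T(\mathcal G)$ is the set of terminal trees derivable from $S$. $\mathcal S(\mathcal G)$ is the language of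 the CFG with start $\top$, nonterminals $\{\top\}\cup N^2$ (write $n_g=(n,g)$), terminals $\alpha_n=(\alpha,n)$ and $\frac{\sigma}{n_1\ n_2}=(\sigma,n_1,n_2)$, and productions $\top\to\alpha_n$ for $(n\to\alpha)\in P$, $\top\to\alpha_nb_n$ for $(n\to b(\alpha))\in P$, and for all $g\in N$: $n_g\to b'_gb_g$ for $(n\to b(b'(\Box)))\in P$, $n_g\to\frac{\sigma}{g\ n'}$ for $(n\to\sigma(\Box,n'))\in P$, $n_g\to\frac{\sigma}{n'\ g}$ for $(n\to\sigma(n',\Box))\in P$. For an alphabet $\Theta$ and $\triangleleft\notin\Theta$, $\mathrm{Next}(L)=\bigcup_n\{\langle\theta_2,\theta_1\rangle\cdots\langle\theta_n,\theta_{n-1}\rangle\langle\triangleleft,\theta_n\rangle\mid\theta_1\cdots\theta_n\in L\}$. A letter $(s',\alpha_n)$ of $\mathrm{Next}(\mathcal S(\mathcal G))$ is regarded as the leaf symbol $((s',\alpha),n)$ and a letter $(s',\frac{\sigma}{n_1\ n_2})$ as the binary symbol $((s',\sigma),n_1,n_2)$ with direction $d((s',\sigma))=d(\sigma)$. For such annotated symbols define $\mathrm{gen}$ of a leaf symbol with annotation $n$ as $n$ and of a binary symbol annotated $(n_1,n_2)$ with underlying $\sigma$ as $n_{d(\sigma)}$; for a tree set $T$, $T_n$ is the set of trees whose root symbol has $\mathrm{gen}=n$; $\mathrm{attach}_T$ of a one-letter word is the leaf itself, and $\mathrm{attach}_T(w\,x)$ for a binary symbol $x$ annotated $(n_1,n_2)$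 with direction $k$ is the set of trees $x(t_1,t_2)$ with $t_k\in\mathrm{attach}_T(w)$ and $t_{3-k}\in T_{n_{3-k}}$; $\mathcal F(L)$ is the smallest $\mathcal F$ with $\mathrm{attach}_{\mathcal F}(w)\subseteq\mathcal F$ for all $w\in L$, and $\mathcal F(L)_S$ its trees whose root has $\mathrm{gen}=S$. MPDA $\mathcal A=(Q,\Delta,\Gamma,\delta,\tau,I,F)$: states $Q$, input symbols $\Delta$, stack symbols $\Gamma$, transitions $\delta\subseteq(Q\times\Gamma^{\le1}\times\Gamma^{\le1}\times Q)\setminus(Q\times\Gamma\times\Gamma\times Q)$, output $\tau:Q\to\Delta$, $I,F\subseteq Q$; moves $\langle q,\gamma\alpha\rangle\vdash\langle q',\gamma'\alpha\rangle$ for $(q,\gamma,\gamma',q')\in\delta$ if $\gamma\alpha\neq\varepsilon$; accepting runs start in $\langle q,\gamma\rangle$ with $q\in I$, $\gamma\in\Gamma$, and end in $\langle q,\varepsilon\rangle$ with $q\in F$; $L(\mathcal A)$ is the set of output strings $\tau(q_0)\cdots\tau(q_n)$ of accepting runs. Pop-normalized: some $\mathrm{return}:\Gamma\to Q$ satisfies $q'=\mathrm{return}(\gamma)$ for all $(q,\gamma,\varepsilon,q')\in\delta$, $\gamma\in\Gamma$. *)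

From mathcomp Require Import all_boot.
Set Implicit Arguments. Unset Strict Implicit. Unset Printing Implicit Defensive.

(* Spine direction: D1 = first child, D2 = second child. *)
Inductive dir := D1 | D2.

Inductive tree (A B : Type) := Leaf of A | Node of B & tree A B & tree A B.
Arguments Leaf {A B}. Arguments Node {A B}.

Fixpoint relabel (A B A' B' : Type) (f : A -> A') (g : B -> B') (t : tree A B)
  : tree A' B' :=
  match t with
  | Leaf a => Leaf (f a)
  | Node b l r => Node (g b) (relabel f g l) (relabel f g r)
  end.

Inductive star (T : Type) (R : T -> T -> Prop) : T -> T -> Prop :=
| star_refl x : star R x x
| star_step x y z : R x y -> star R y z -> star R x z.

Fixpoint ppath (T : Type) (R : T -> T -> Prop) (x : T) (s : seq T) : Prop :=
  match s with [::] => True | y :: s' => R x y /\ ppath R y s' end.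

Section SpineGrammar.
Variables (N0 N1 Sig0 Sig2 : finType).

Definition NT := (N0 + N1)%type.

(* Productions of a normalized spine grammar:
   PA n a      : n -> a             (n ∈ N0, a ∈ Σ0)
   PB n b a    : n -> b(a)          (n ∈ N0, b ∈ N1, a ∈ Σ0)
   PC n b1 b2  : n -> b1(b2(□))     (n, b1, b2 ∈ N1)
   PL n s a    : n -> s(□, a)       (n ∈ N1, s ∈ Σ2, a ∈ N0)
   PR n s a    : n -> s(a, □)       (n ∈ N1, s ∈ Σ2, a ∈ N0) *)
Inductive production :=
| PA (n : N0) (a : Sig0)
| PB (n : N0) (b : N1) (a : Sig0)
| PC (n b1 b2 : N1)
| PL (n : N1) (s : Sig2) (a : N0)
| PR (n : N1) (s : Sig2) (a : N0).

Definition unary_lhs (p : production) : bool :=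
  match p with PA _ _ | PB _ _ _ => false | _ => true end.

Inductive stree :=
| SL (a : Sig0)
| SB (s : Sig2) (l r : stree)
| SN0 (n : N0)
| SN1 (b : N1) (t : stree).

Fixpoint emb (t : tree Sig0 Sig2) : stree :=
  match t with Leaf a => SL a | Node s l r => SB s (emb l) (emb r) end.

Fixpoint hasN0 (n : N0) (t : stree) : Prop :=
  match t with
  | SL _ => False
  | SB _ l r => hasN0 n l \/ hasN0 n r
  | SN0 m => m = n
  | SN1 _ t' => hasN0 n t'
  end.

Inductive step_in (Q : pred production) : stree -> stree -> Prop :=
| st_A n a : Q (PA n a) -> step_in Q (SN0 n) (SL a)
| st_B n b a : Q (PB n b a) -> step_in Q (SN0 n) (SN1 b (SL a))
| st_C n b1 b2 t : Q (PC n b1 b2) -> step_in Q (SN1 n t) (SN1 b1 (SN1 b2 t))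
| st_L n s a t : Q (PL n s a) -> step_in Q (SN1 n t) (SB s t (SN0 a))
| st_R n s a t : Q (PR n s a) -> step_in Q (SN1 n t) (SB s (SN0 a) t)
| st_Bl s l l' r : step_in Q l l' -> step_in Q (SB s l r) (SB s l' r)
| st_Br s l r r' : step_in Q r r' -> step_in Q (SB s l r) (SB s l r')
| st_N1 b t t' : step_in Q t t' -> step_in Q (SN1 b t) (SN1 b t').

Definition normalized_spine (S : N0) (P : pred production) (d : Sig2 -> dir)
  : Prop :=
  (forall n s a, P (PL n s a) -> a <> S) /\
  (forall n s a, P (PR n s a) -> a <> S) /\
  (forall n s a, P (PL n s a) -> d s = D1) /\
  (forall n s a, P (PR n s a) -> d s = D2) /\
  (forall (n : N0) t1 t, step_in P (SN0 n) t1 ->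
     star (step_in (fun p => P p && unary_lhs p)) t1 t -> ~ hasN0 n t).

Definition TG (S : N0) (P : pred production) (t : tree Sig0 Sig2) : Prop :=
  star (step_in P) (SN0 S) (emb t).

(* terminals of S(G): α_n = SymA α n, σ/(n1 n2) = SymS σ n1 n2 *)
Inductive sym := SymA (a : Sig0) (n : NT) | SymS (s : Sig2) (n1 n2 : NT).

(* CFG S(G): SGnt n g w  <=>  nonterminal n_g derives w ; SG w <=> ⊤ derives w *)
Inductive SGnt (P : pred production) : NT -> NT -> seq sym -> Prop :=
| sg_C n b1 b2 g w1 w2 : P (PC n b1 b2) -> SGnt P (inr b2) g w1 ->
    SGnt P (inr b1) g w2 -> SGnt P (inr n) g (w1 ++ w2)
| sg_L n s a g : P (PL n s a) -> SGnt P (inr n) g [:: SymS s g (inl a)]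
| sg_R n s a g : P (PR n s a) -> SGnt P (inr n) g [:: SymS s (inl a) g].

Inductive SG (P : pred production) : seq sym -> Prop :=
| sg_A n a : P (PA n a) -> SG P [:: SymA a (inl n)]
| sg_B n b a w : P (PB n b a) -> SGnt P (inr b) (inl n) w ->
    SG P (SymA a (inl n) :: w).

(* letters of Next: ⟨θ', θ⟩ with θ' = None standing for ◁ *)
Definition letter := (option sym * sym)%type.

Definition next_word (s : seq sym) : seq letter :=
  zip (rcons (map Some (behead s)) None) s.

Definition Next (L : seq sym -> Prop) (w : seq letter) : Prop :=
  exists s, L s /\ 0 < size s /\ w = next_word s.

(* annotated leaf symbols ((s',α),n) and binary symbols ((s',σ),n1,n2) *)
Definition X0 := (option sym * Sig0 * NT)%type.
Definition X2 := (option sym * Sig2 * NT * NT)%type.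

Definition gen2 (d : Sig2 -> dir) (x : X2) : NT :=
  match d x.1.1.2 with D1 => x.1.2 | D2 => x.2 end.

Definition gen_tree (d : Sig2 -> dir) (t : tree X0 X2) : NT :=
  match t with Leaf x => x.2 | Node x _ _ => gen2 d x end.

Inductive attach (d : Sig2 -> dir) (T : tree X0 X2 -> Prop)
  : seq letter -> tree X0 X2 -> Prop :=
| att_leaf s' a n : attach d T [:: (s', SymA a n)] (Leaf (s', a, n))
| att_node1 w s' s n1 n2 t1 t2 : d s = D1 ->
    attach d T w t1 -> T t2 -> gen_tree d t2 = n2 ->
    attach d T (rcons w (s', SymS s n1 n2)) (Node (s', s, n1, n2) t1 t2)
| att_node2 w s' s n1 n2 t1 t2 : d s = D2 ->
    T t1 -> gen_tree d t1 = n1 -> attach d T w t2 ->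
    attach d T (rcons w (s', SymS s n1 n2)) (Node (s', s, n1, n2) t1 t2).

(* F(L): the smallest tree set closed under attach for words of L *)
Definition FL (d : Sig2 -> dir) (L : seq letter -> Prop) (t : tree X0 X2)
  : Prop :=
  forall F : tree X0 X2 -> Prop,
    (forall w t', L w -> attach d F w t' -> F t') -> F t.

Definition FL_S (d : Sig2 -> dir) (S : N0) (L : seq letter -> Prop)
  (t : tree X0 X2) : Prop :=
  FL d L t /\ gen_tree d t = inl S.

End SpineGrammar.

Record mpda (Delta : Type) := Mpda {
  mQ : finType;
  mG : finType;
  mdelta : mQ -> option mG -> option mG -> mQ -> bool;
  mtau : mQ -> Delta;
  mI : pred mQ;
  mF : pred mQ;
  mdelta_ok : forall q g g' q', ~~ mdelta q (Some g) (Some g') q' }.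

Arguments mQ {Delta} m. Arguments mG {Delta} m.
Arguments mdelta {Delta} m _ _ _ _. Arguments mtau {Delta} m _.
Arguments mI {Delta} m _. Arguments mF {Delta} m _.

Definition ocons (T : Type) (o : option T) (s : seq T) : seq T :=
  match o with Some x => x :: s | None => s end.

Definition mconfig (Delta : Type) (A : mpda Delta) := (mQ A * seq (mG A))%type.

Definition mmove (Delta : Type) (A : mpda Delta) (c c' : mconfig A) : Prop :=
  exists g g' al, mdelta A c.1 g g' c'.1 /\ c.2 = ocons g al /\
    c'.2 = ocons g' al /\ c.2 <> [::].

Definition mlang (Delta : Type) (A : mpda Delta) (w : seq Delta) : Prop :=
  exists (q0 : mQ A) (g0 : mG A) (cs : seq (mconfig A)),
    let c0 : mconfig A := (q0, [:: g0]) in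
    mI A q0 /\ ppath (@mmove Delta A) c0 cs /\
    (last c0 cs).2 = [::] /\ mF A (last c0 cs).1 /\
    w = map (fun c : mconfig A => mtau A c.1) (c0 :: cs).

Definition pop_normalized (Delta : Type) (A : mpda Delta) : Prop :=
  exists ret : mG A -> mQ A,
    forall q g q', mdelta A q (Some g) None q' -> q' = ret g.

From HB Require Import structures.
From Pilot Require Import Defs.
From mathcomp Require Import all_boot boolp.
Set Implicit Arguments. Unset Strict Implicit. Unset Printing Implicit Defensive.

(* The words of S(G) that are longer than one letter are [α_n w] with [w]
   derived from [b_n] in a context-free grammar whose binary rules
   [n_g -> b'_g b_g] keep the generator [g].  The automaton follows leftmost
   derivations of [w]: a state holds the letter to emit, [g], and a mode, which
   is either a whole unary nonterminal [W] or the rest [spine_rest g Z X] still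
   due after the leftmost leaf below [X] inside [Z].  Emitting one symbol
   splits such a rest into at most two rests, so a single push per step
   suffices; the pushed state guesses the last symbol of the inner rest and
   emits it when popped, hence return(γ) = γ.  On the tree side, T(G) is
   captured by a mutually inductive derivation relation, and F(Next(S(G)))
   builds exactly its derivation trees spine by spine, annotated with the
   letters of the spine words; erasing the annotations is the relabeling. *)

Lemma map_eq_cat (T U : Type) (f : T -> U) s u1 u2 : map f s = u1 ++ u2 ->
  exists s1 s2, [/\ s = s1 ++ s2, map f s1 = u1 & map f s2 = u2].
Proof.
move=> Hs; exists (take (size u1) s), (drop (size u1) s).
by rewrite cat_take_drop map_take map_drop Hs take_size_cat // drop_size_cat.
Qed.

Lemma star_trans (T : Type) (R : T -> T -> Prop) x y z :
  star R x y -> star R y z -> star R x z.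
Proof. by elim=> // {}x {}y z' Hxy _ IH /IH; apply: star_step Hxy. Qed.

Lemma star_map (T : Type) (R : T -> T -> Prop) (f : T -> T) x y :
  (forall x y, R x y -> R (f x) (f y)) -> star R x y -> star R (f x) (f y).
Proof.
move=> Hf; elim=> [{}x|{}x {}y z Hxy _ IH]; first exact: star_refl.
exact: star_step (Hf _ _ Hxy) IH.
Qed.

Section Encodings.
Variables (N0 N1 Sig0 Sig2 : finType).

Definition sym_code (x : sym N0 N1 Sig0 Sig2) :
    (Sig0 * NT N0 N1) + (Sig2 * NT N0 N1 * NT N0 N1) :=
  match x with SymA a n => inl (a, n) | SymS s n1 n2 => inr (s, n1, n2) end.

Definition sym_decode (e : (Sig0 * NT N0 N1) + (Sig2 * NT N0 N1 * NT N0 N1)) :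
    sym N0 N1 Sig0 Sig2 :=
  match e with inl (a, n) => SymA Sig2 a n | inr (s, n1, n2) => SymS Sig0 s n1 n2 end.

Lemma sym_codeK : cancel sym_code sym_decode. Proof. by case. Qed.

Inductive mode := Start of N1 | Inside of N1 & N1.

Definition mode_code (m : mode) : N1 + N1 * N1 :=
  match m with Start W => inl W | Inside Z X => inr (Z, X) end.

Definition mode_decode (e : N1 + N1 * N1) : mode :=
  match e with inl W => Start W | inr (Z, X) => Inside Z X end.

Lemma mode_codeK : cancel mode_code mode_decode. Proof. by case. Qed.

Record state := State {
  st_letter : letter N0 N1 Sig0 Sig2;
  st_gen : NT N0 N1;
  st_mode : option mode }.

Definition state_code (q : state) := (st_letter q, st_gen q, st_mode q).

Definition state_decode (e : letter N0 N1 Sig0 Sig2 * NT N0 N1 * option mode) :=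
  State e.1.1 e.1.2 e.2.

Lemma state_codeK : cancel state_code state_decode. Proof. by case. Qed.

End Encodings.

HB.instance Definition _ (N0 N1 Sig0 Sig2 : finType) :=
  Finite.copy (sym N0 N1 Sig0 Sig2) (can_type (@sym_codeK N0 N1 Sig0 Sig2)).
HB.instance Definition _ (N1 : finType) :=
  Finite.copy (mode N1) (can_type (@mode_codeK N1)).
HB.instance Definition _ (N0 N1 Sig0 Sig2 : finType) :=
  Finite.copy (state N0 N1 Sig0 Sig2) (can_type (@state_codeK N0 N1 Sig0 Sig2)).

Section SpineAutomaton.
Variables (N0 N1 Sig0 Sig2 : finType) (P : pred (production N0 N1 Sig0 Sig2)).

Local Notation NT := (NT N0 N1).
Local Notation sym := (sym N0 N1 Sig0 Sig2).
Local Notation letter := (letter N0 N1 Sig0 Sig2).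
Local Notation mode := (mode N1).
Local Notation state := (state N0 N1 Sig0 Sig2).
Local Notation PB := (@PB N0 N1 Sig0 Sig2).
Local Notation PC := (@PC N0 N1 Sig0 Sig2).
Local Notation PL := (@PL N0 N1 Sig0 Sig2).
Local Notation PR := (@PR N0 N1 Sig0 Sig2).
Local Notation SymA := (@SymA N0 N1 Sig0 Sig2).
Local Notation SymS := (@SymS N0 N1 Sig0 Sig2).

Lemma SGnt_neq0 n g v : SGnt P n g v -> v <> [::].
Proof. by elim=> // n' b1 b2 g' [|x w1]. Qed.

Definition leaf_sym (g : NT) (V : N1) (x : sym) : Prop :=
  exists s a, P (PL V s a) /\ x = SymS s g (inl a) \/
              P (PR V s a) /\ x = SymS s (inl a) g.

Lemma leaf_sym_SGnt g V x : leaf_sym g V x -> SGnt P (inr V) g [:: x].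
Proof. by move=> [s [a [[HP ->]|[HP ->]]]]; [apply: sg_L | apply: sg_R]. Qed.

(* [spine_rest g Z X v]: in a derivation from [Z], [v] is what the right
   siblings on the left spine from [Z] down to its descendant [X] derive. *)
Inductive spine_rest (g : NT) : N1 -> N1 -> seq sym -> Prop :=
| rest_nil Z : spine_rest g Z Z [::]
| rest_cons Z X Y W v1 v2 : P (PC Y W X) -> SGnt P (inr W) g v1 ->
    spine_rest g Z Y v2 -> spine_rest g Z X (v1 ++ v2).

Lemma spine_rest_SGnt g Z X v u :
  spine_rest g Z X v -> SGnt P (inr X) g u -> SGnt P (inr Z) g (u ++ v).
Proof.
move=> HR; elim: HR u => {Z X v} [Z|Z X Y W v1 v2 HP HW _ IH] u Hu.
  by rewrite cats0.
by rewrite catA; apply: IH; apply: sg_C HP Hu HW.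
Qed.

Lemma spine_rest_cat g Y X Z v1 v2 :
  spine_rest g Y X v1 -> spine_rest g Z Y v2 -> spine_rest g Z X (v1 ++ v2).
Proof.
move=> HR; elim: HR v2 => {Y X v1} // Y X Y' W u1 u2 HP HW _ IH v2 H2.
by rewrite -catA; apply: rest_cons HP HW (IH _ H2).
Qed.

Lemma spine_rest_nil g Z X : spine_rest g Z X [::] -> Z = X.
Proof.
move E: [::] => v H; case: H E => // Z' X' Y W [|x v1] v2 _ HW //.
by have := SGnt_neq0 HW.
Qed.

Lemma SGnt_consE g W x u :
  SGnt P (inr W) g (x :: u) <-> exists2 C, leaf_sym g C x & spine_rest g W C u.
Proof.
split; last by move=> [C /leaf_sym_SGnt HC HR]; apply: spine_rest_SGnt HR HC.
move E: (inr W) => n; move Ev: (x :: u) => v H.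
elim: H W x u E Ev => {n g v}.
- move=> n b1 b2 g w1 w2 HP H1 IH1 H2 _ W x u [->].
  case: w1 H1 IH1 => [/SGnt_neq0 //|y w1] H1 IH1 [-> ->].
  have [C HC HR] := IH1 _ _ _ erefl erefl.
  exists C => //; apply: spine_rest_cat HR _.
  by rewrite -[w2]cats0; apply: rest_cons HP H2 (rest_nil _ _).
- move=> n s a g HP W x u [->] [-> ->].
  by exists n; [exists s, a; left | apply: rest_nil].
- move=> n s a g HP W x u [->] [-> ->].
  by exists n; [exists s, a; right | apply: rest_nil].
Qed.

Lemma SGnt1E g W x : SGnt P (inr W) g [:: x] -> leaf_sym g W x.
Proof. by case/SGnt_consE=> C HC /spine_rest_nil ->. Qed.

Definition mode_lang (g : NT) (m : mode) : seq sym -> Prop :=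
  match m with
  | Start W => SGnt P (inr W) g
  | Inside Z X => spine_rest g Z X
  end.

Variant pop_ok (g : NT) : mode -> sym -> Prop :=
| pop_start W x : leaf_sym g W x -> pop_ok g (Start W) x
| pop_inside Z X V x : P (PC Z V X) -> leaf_sym g V x -> pop_ok g (Inside Z X) x.

Variant internal_ok (g : NT) : mode -> sym -> mode -> Prop :=
| internal_start W C x : leaf_sym g C x -> internal_ok g (Start W) x (Inside W C)
| internal_left Z X Y V x : P (PC Y V X) -> leaf_sym g V x ->
    internal_ok g (Inside Z X) x (Inside Z Y)
| internal_right Z X W C x : P (PC Z W X) -> leaf_sym g C x ->
    internal_ok g (Inside Z X) x (Inside W C).

Variant push_ok (g : NT) : mode -> sym -> mode -> mode -> Prop :=
| push_inside Z X Y W C x : P (PC Y W X) -> leaf_sym g C x ->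
    push_ok g (Inside Z X) x (Inside W C) (Inside Z Y).

Lemma mode_lang_pop g m x : pop_ok g m x -> mode_lang g m [:: x].
Proof.
case=> [W {}x /leaf_sym_SGnt //|Z X V {}x HP /leaf_sym_SGnt HV] /=.
by rewrite -[[:: x]]cats0; apply: rest_cons HP HV (rest_nil _ _).
Qed.

Lemma mode_lang_internal g m x m' u :
  internal_ok g m x m' -> mode_lang g m' u -> mode_lang g m (x :: u).
Proof.
case=> [W C {}x HC|Z X Y V {}x HP /leaf_sym_SGnt HV|Z X W C {}x HP HC] /= HR.
- by apply/SGnt_consE; exists C.
- exact: rest_cons HP HV HR.
- have HW : SGnt P (inr W) g (x :: u) by apply/SGnt_consE; exists C.
  by rewrite -[x :: u]cats0; apply: rest_cons HP HW (rest_nil _ _).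
Qed.

Lemma mode_lang_push g m x m1 m2 u1 u2 : push_ok g m x m1 m2 ->
  mode_lang g m1 u1 -> mode_lang g m2 u2 -> mode_lang g m (x :: u1 ++ u2).
Proof.
case=> Z X Y W C {}x HP HC /= HR1 HR2.
have HW : SGnt P (inr W) g (x :: u1) by apply/SGnt_consE; exists C.
exact: rest_cons HP HW HR2.
Qed.

Lemma mode_lang1E g m x : mode_lang g m [:: x] -> pop_ok g m x.
Proof.
case: m => [W /SGnt1E|Z X]; first exact: pop_start.
move E: [:: x] => v H; case: H E => // {}Z {}X Y W [|y v1] v2 HP HW HR.
  by have := SGnt_neq0 HW.
case=> -> /esym/nilP; rewrite cat_nilp => /andP[/nilP Ev1 /nilP Ev2].
by subst; rewrite (spine_rest_nil HR); apply: pop_inside HP (SGnt1E HW).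
Qed.

Lemma mode_lang_consE g m x u : mode_lang g m (x :: u) -> u != [::] ->
  (exists2 m', internal_ok g m x m' & mode_lang g m' u) \/
  exists m1 m2, push_ok g m x m1 m2 /\ exists u1 u2,
    [/\ u = u1 ++ u2, u1 != [::], u2 != [::], mode_lang g m1 u1 & mode_lang g m2 u2].
Proof.
case: m => [W /SGnt_consE[C HC HR] _|Z X /=].
  by left; exists (Inside W C); first exact: internal_start.
move E: (x :: u) => v H; case: H E => // {}Z {}X Y W [|y u1] v2 HP HW HR.
  by have := SGnt_neq0 HW.
case=> -> ->; have /SGnt_consE[C HC HWC] := HW.
have [Eu1 | nu1] := eqVneq u1 [::]; have [Ev2 | nv2] := eqVneq v2 [::];
  subst; move=> // _.
- rewrite -(spine_rest_nil HWC) in HC; left; exists (Inside Z Y) => //.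
  exact: internal_left HP HC.
- rewrite -(spine_rest_nil HR) in HP; rewrite cats0; left; exists (Inside W C) => //.
  exact: internal_right HP HC.
- right; exists (Inside W C), (Inside Z Y); split; first exact: push_inside HP HC.
  by exists u1, v2.
Qed.

Definition st_look (q : state) : option sym := (st_letter q).1.
Definition st_sym (q : state) : sym := (st_letter q).2.

Definition state_lang (q : state) (u : seq sym) : Prop :=
  if st_mode q is Some m then mode_lang (st_gen q) m u else False.

Variant trans : state -> option state -> option state -> state -> Prop :=
| trans_pop q r m : st_mode q = Some m -> st_look q = Some (st_sym r) ->
    pop_ok (st_gen q) m (st_sym r) -> trans q (Some r) None r
| trans_internal q q' m m' : st_mode q = Some m -> st_look q = Some (st_sym q') ->
    st_gen q' = st_gen q -> st_mode q' = Some m' ->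
    internal_ok (st_gen q) m (st_sym q') m' -> trans q None None q'
| trans_push q q' r m m1 m2 : st_mode q = Some m ->
    st_look q = Some (st_sym q') -> st_gen q' = st_gen q -> st_mode q' = Some m1 ->
    st_gen r = st_gen q -> st_mode r = Some m2 ->
    push_ok (st_gen q) m (st_sym q') m1 m2 -> trans q None (Some r) q'.

Lemma trans_look q o o' q' : trans q o o' q' -> st_look q = Some (st_sym q').
Proof. by case. Qed.

Lemma trans_no_pop_push q r r' q' : ~~ `[< trans q (Some r) (Some r') q' >].
Proof. by apply/negP => /asboolP H; inversion H. Qed.

Definition initial (q : state) : Prop :=
  exists n b a, [/\ st_gen q = inl n, st_mode q = Some (Start b),
                    st_sym q = SymA a (inl n) & P (PB n b a)].

Definition final (q : state) : Prop := st_mode q = None /\ st_look q = None.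

Definition spine_mpda : mpda letter :=
  @Mpda letter state state (fun q o o' q' => `[< trans q o o' q' >])
    (@st_letter _ _ _ _) (fun q => `[< initial q >]) (fun q => `[< final q >])
    trans_no_pop_push.

Lemma spine_mpda_pop_normalized : pop_normalized spine_mpda.
Proof. by exists id => q r q' /asboolP H; inversion H. Qed.

Local Notation cfg := (mconfig spine_mpda).
Local Notation syms cs := (map (fun c : cfg => st_sym c.1) cs).
Local Notation mmove := (@mmove _ spine_mpda).

Lemma spine_mmove q o o' q' al : trans q o o' q' -> ocons o al <> [::] ->
  mmove (q, ocons o al) (q', ocons o' al).
Proof. by move=> H Hn; exists o, o', al; split=> //; apply/asboolP. Qed.

Lemma spine_mmove_look (c c' : cfg) :
  mmove c c' -> st_look c.1 = Some (st_sym c'.1).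
Proof. by move=> [o [o' [al [/asboolP /trans_look]]]]. Qed.

(* The state [r] below [q] on the stack already carries the last symbol of the
   segment that [q] still has to derive: popping moves to [r], which emits it. *)
Fixpoint stack_lang (q : state) (stk : seq state) (v : seq sym) : Prop :=
  match stk with
  | [::] => st_mode q = None /\ v = [::]
  | r :: stk' => exists v0 v', [/\ v = rcons v0 (st_sym r) ++ v',
      state_lang q (rcons v0 (st_sym r)), st_look r = ohead v' & stack_lang r stk' v']
  end.

Lemma stack_lang_move (c c' : cfg) v : mmove c c' ->
  stack_lang c'.1 c'.2 v -> st_look c'.1 = ohead v ->
  stack_lang c.1 c.2 (st_sym c'.1 :: v).
Proof.
case: c c' => [q stk] [q' stk'] [o [o' [al [/asboolP H [/= -> [/= -> Hn]]]]]].
rewrite /= in H; case: H Hn => {q q' o o'}.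
- move=> q r m Hm _ Hpop _ HS Hr /=.
  by exists [::], v; split=> //; rewrite /state_lang Hm; apply: mode_lang_pop.
- move=> q q' m m' Hm _ Hg Hm' Hint _.
  case: al => [[]|r al]; first by rewrite Hm'.
  move=> [v0 [v' [-> HM Hr HS]]] _; exists (st_sym q' :: v0), v'; split=> //.
  by move: HM; rewrite /state_lang Hm Hm' Hg; apply: mode_lang_internal.
- move=> q q' r m m1 m2 Hm _ Hg Hm1 Hgr Hm2 Hpush _.
  move=> [v0 [v1 [-> HM1 _ HS1]]] _; case: al HS1 => [[]|r' al]; first by rewrite Hm2.
  move=> [v2 [v' [-> HM2 Hr' HS]]].
  exists (st_sym q' :: rcons v0 (st_sym r) ++ v2), v'.
  rewrite rcons_cons rcons_cat /= -catA; split=> //.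
  move: HM1 HM2; rewrite /state_lang Hm Hm1 Hm2 Hg Hgr.
  exact: mode_lang_push.
Qed.

Lemma stack_lang_run (c : cfg) cs : ppath mmove c cs ->
  (last c cs).2 = [::] -> final (last c cs).1 ->
  stack_lang c.1 c.2 (syms cs) /\ st_look c.1 = ohead (syms cs).
Proof.
elim: cs c => [|c' cs IH] [q stk] /=; first by move=> _ -> [].
move=> [Hmv Hp] Hs HF; have [HS Hl] := IH c' Hp Hs HF.
by split; [apply: stack_lang_move Hmv HS Hl | apply: spine_mmove_look Hmv].
Qed.

Lemma stack_lang_next (c : cfg) x v :
  stack_lang c.1 c.2 (x :: v) -> st_look c.1 = Some x ->
  exists c' : cfg,
    [/\ mmove c c', st_sym c'.1 = x, stack_lang c'.1 c'.2 v & st_look c'.1 = ohead v].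
Proof.
case: c => q [|r al] /=; first by case.
move=> [v0 [v' [Ev HM Hr HS]]] Hl.
move: HM; rewrite /state_lang; case Hm: (st_mode q) => [m|] // HM.
case: v0 Ev HM => [[Ex Ev] /mode_lang1E Hpop|y v0 [Ey Ev] HM]; subst.
  exists (r, al); split=> //.
  by apply: (spine_mmove (al := al) (trans_pop Hm Hl Hpop)).
have /(mode_lang_consE HM)[[m' Hint HM'] | [m1 [m2 [Hpush]]]] :
    rcons v0 (st_sym r) != [::] by rewrite -size_eq0 size_rcons.
  set q' := State (ohead (rcons v0 (st_sym r) ++ v'), y) (st_gen q) (Some m').
  have Htr := trans_internal (q' := q') Hm Hl erefl erefl Hint.
  exists (q', r :: al); split=> //; first by apply: (spine_mmove (al := r :: al) Htr).
  by exists v0, v'.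
move=> [u1 [u2 [Eu nu1 nu2 H1 H2]]].
case/lastP: u2 Eu nu2 H2 => // u2 z2; rewrite -rcons_cat => /rcons_inj[-> <-] _ H2.
case/lastP: u1 nu1 H1 => // u1 z1 _ H1.
set r1 := State (ohead (rcons u2 (st_sym r) ++ v'), z1) (st_gen q) (Some m2).
set q' := State (ohead (rcons (rcons u1 z1 ++ u2) (st_sym r) ++ v'), y) (st_gen q)
                (Some m1).
exists (q', r1 :: r :: al); split=> //.
  have Htr := trans_push (q' := q') (r := r1) Hm Hl erefl erefl erefl erefl Hpush.
  by apply: (spine_mmove (al := r :: al) Htr).
exists u1, (rcons u2 (st_sym r) ++ v'); split=> //; first by rewrite rcons_cat catA.
by exists u2, v'.
Qed.

Lemma stack_lang_complete v (c : cfg) :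
  stack_lang c.1 c.2 v -> st_look c.1 = ohead v ->
  exists cs, [/\ ppath mmove c cs, syms cs = v, (last c cs).2 = [::] &
                 final (last c cs).1].
Proof.
elim: v c => [|x v IH] [q stk] /= HS Hl.
  case: stk HS => [[Hm _]|r stk [v0 [v' [/(congr1 size)]]]]; first by exists [::].
  by rewrite size_cat size_rcons.
have [c' [Hmv <- HS' Hl']] := stack_lang_next (c := (q, stk)) HS Hl.
have [cs [Hp <- Hs HF]] := IH c' HS' Hl'.
by exists (c' :: cs).
Qed.

Lemma next_word_cons (x : sym) v :
  next_word (x :: v) = (ohead v, x) :: next_word v.
Proof. by case: v. Qed.

Lemma st_letterE q : st_letter q = (st_look q, st_sym q).
Proof. by rewrite /st_look /st_sym; case: (st_letter q). Qed.

Lemma run_output (c : cfg) cs : ppath mmove c cs -> st_look (last c cs).1 = None ->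
  map (fun c : cfg => st_letter c.1) (c :: cs) = next_word (st_sym c.1 :: syms cs).
Proof.
elim: cs c => [|c' cs IH] c /=; first by move=> _ Hl; rewrite st_letterE Hl.
move=> [Hmv Hp] Hl; rewrite next_word_cons -IH //=.
by rewrite st_letterE (spine_mmove_look Hmv).
Qed.

Lemma spine_mpda_Next w : mlang spine_mpda w -> Next (SG P) w.
Proof.
move=> [q0 [g0 [cs [/asboolP HI [Hp [Hs [/asboolP HF ->]]]]]]].
have [/= [v0 [v' [Ev HM _ [_ Ev']]]] _] := stack_lang_run Hp Hs HF.
move: HI HM => [n [b [a [Hg Hm Hsym HPB]]]]; rewrite /state_lang Hm Hg.
rewrite Ev' cats0 in Ev; rewrite -Ev => HSG.
exists (st_sym q0 :: syms cs); split; first by rewrite Hsym; apply: sg_B HPB HSG.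
by split=> //; apply: run_output Hp _; case: HF.
Qed.

Lemma Next_spine_mpda w : Next (SG P) w -> size w != 1 -> mlang spine_mpda w.
Proof.
move=> [_ [[n a _|n b a v HPB Hv] [_ ->]]] //.
have [v0 [y Ev]] : exists v0 y, v = rcons v0 y.
  by case/lastP: v Hv => [/SGnt_neq0|v0 y _]; last exists v0, y.
set q0 := State (ohead v, SymA a (inl n)) (inl n) (Some (Start b)).
set g0 := State (None, y) (inl n) None.
have HS : stack_lang q0 [:: g0] v by exists v0, [::]; rewrite cats0 -Ev.
have [cs [Hp Hsyms Hs HF]] := stack_lang_complete (c := (q0, [:: g0])) HS erefl.
exists q0, g0, cs; split; first by apply/asboolP; exists n, b, a.
do 3!split=> //; first exact/asboolP.
by rewrite (run_output Hp) ?Hsyms //; case: HF.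
Qed.

End SpineAutomaton.

Section SpineTrees.
Variables (N0 N1 Sig0 Sig2 : finType) (P : pred (production N0 N1 Sig0 Sig2)).
Variable d : Sig2 -> dir.

Local Notation sym := (sym N0 N1 Sig0 Sig2).
Local Notation letter := (letter N0 N1 Sig0 Sig2).
Local Notation ttree := (tree Sig0 Sig2).
Local Notation xtree := (tree (X0 N0 N1 Sig0 Sig2) (X2 N0 N1 Sig0 Sig2)).
Local Notation stree := (stree N0 N1 Sig0 Sig2).
Local Notation PA := (@PA N0 N1 Sig0 Sig2).
Local Notation PB := (@PB N0 N1 Sig0 Sig2).
Local Notation PC := (@PC N0 N1 Sig0 Sig2).
Local Notation PL := (@PL N0 N1 Sig0 Sig2).
Local Notation PR := (@PR N0 N1 Sig0 Sig2).
Local Notation SymA := (@SymA N0 N1 Sig0 Sig2).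
Local Notation SymS := (@SymS N0 N1 Sig0 Sig2).
Local Notation emb := (@emb N0 N1 Sig0 Sig2).
Local Notation SN0 := (@SN0 N0 N1 Sig0 Sig2).
Local Notation SN1 := (@SN1 N0 N1 Sig0 Sig2).
Local Notation SB := (@SB N0 N1 Sig0 Sig2).
Local Notation derives := (star (step_in P)).

(* [Der n t]: [n] derives [t];  [DerB b t0 t]: [b(t0)] derives [t]. *)
Inductive Der : N0 -> ttree -> Prop :=
| der_A n a : P (PA n a) -> Der n (Leaf a)
| der_B n b a t : P (PB n b a) -> DerB b (Leaf a) t -> Der n t
with DerB : N1 -> ttree -> ttree -> Prop :=
| derB_C n b1 b2 t0 t1 t : P (PC n b1 b2) -> DerB b2 t0 t1 -> DerB b1 t1 t ->
    DerB n t0 t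
| derB_L n s a t0 t2 : P (PL n s a) -> Der a t2 -> DerB n t0 (Node s t0 t2)
| derB_R n s a t0 t2 : P (PR n s a) -> Der a t2 -> DerB n t0 (Node s t2 t0).

Scheme Der_mut := Induction for Der Sort Prop
with DerB_mut := Induction for DerB Sort Prop.
Combined Scheme Der_DerB_ind from Der_mut, DerB_mut.

Lemma Der_derives :
  (forall n t, Der n t -> derives (SN0 n) (emb t)) /\
  (forall b t0 t, DerB b t0 t -> derives (SN1 b (emb t0)) (emb t)).
Proof.
apply: Der_DerB_ind.
- by move=> n a HP; apply: star_step (st_A HP) (star_refl _ _).
- by move=> n b a t HP _ IH; apply: star_step (st_B HP) IH.
- move=> n b1 b2 t0 t1 t HP _ IH1 _ IH2; apply: star_step (st_C _ HP) _.
  by apply: star_trans IH2; apply: (star_map (f := SN1 b1)) IH1 => x y /st_N1.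
- move=> n s a t0 t2 HP _ IH; apply: star_step (st_L _ HP) _ => /=.
  by apply: (star_map (f := SB s (emb t0))) IH => x y /st_Br.
- move=> n s a t0 t2 HP _ IH; apply: star_step (st_R _ HP) _ => /=.
  by apply: (star_map (f := SB s ^~ (emb t0))) IH => x y /st_Bl.
Qed.

Fixpoint yields (u : stree) (t : ttree) : Prop :=
  match u with
  | Defs.SL a => t = Leaf a
  | Defs.SB s l r => exists tl tr, [/\ t = Node s tl tr, yields l tl & yields r tr]
  | Defs.SN0 n => Der n t
  | Defs.SN1 b u' => exists2 t0, yields u' t0 & DerB b t0 t
  end.

Lemma yields_emb t : yields (emb t) t.
Proof. by elim: t => [a|s l IHl r IHr] //=; exists l, r. Qed.

Lemma yields_step u u' t : step_in P u u' -> yields u' t -> yields u t.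
Proof.
move=> H; elim: H t => /=.
- by move=> n a HP t ->; apply: der_A.
- by move=> n b a HP t [t0 -> H]; apply: der_B HP H.
- move=> n b1 b2 u0 HP t [t1 [t0 Hu H2] H1].
  by exists t0 => //; apply: derB_C HP H2 H1.
- move=> n s a u0 HP t [tl [tr [-> Hl Hr]]].
  by exists tl => //; apply: derB_L HP Hr.
- move=> n s a u0 HP t [tl [tr [-> Hl Hr]]].
  by exists tr => //; apply: derB_R HP Hl.
- by move=> s l l' r _ IH t [tl [tr [-> /IH Hl Hr]]]; exists tl, tr.
- by move=> s l r r' _ IH t [tl [tr [-> Hl /IH Hr]]]; exists tl, tr.
- by move=> b u0 u1 _ IH t [t0 /IH H1 H2]; exists t0.
Qed.

Lemma yields_derives u u' t : derives u u' -> yields u' t -> yields u t.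
Proof. by elim=> // x y z Hxy _ IH /IH /(yields_step Hxy). Qed.

Lemma TG_Der S t : TG S P t <-> Der S t.
Proof.
split; last exact: Der_derives.1.
by move/yields_derives; apply; apply: yields_emb.
Qed.

Inductive spine_step (T : xtree -> Prop) : xtree -> letter -> xtree -> Prop :=
| spine_step1 s' s n1 n2 t1 t2 : d s = D1 -> T t2 -> gen_tree d t2 = n2 ->
    spine_step T t1 (s', SymS s n1 n2) (Node (s', s, n1, n2) t1 t2)
| spine_step2 s' s n1 n2 t1 t2 : d s = D2 -> T t1 -> gen_tree d t1 = n1 ->
    spine_step T t2 (s', SymS s n1 n2) (Node (s', s, n1, n2) t1 t2).

Fixpoint spine_ext (T : xtree -> Prop) (t0 : xtree) (ys : seq letter) (t : xtree)
    : Prop :=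
  if ys is y :: ys' then exists2 t1, spine_step T t0 y t1 & spine_ext T t1 ys' t
  else t = t0.

Lemma spine_stepE T t0 l s n1 n2 t : spine_step T t0 (l, SymS s n1 n2) t ->
  if d s is D1
  then exists2 t2, t = Node (l, s, n1, n2) t0 t2 & T t2 /\ gen_tree d t2 = n2
  else exists2 t1, t = Node (l, s, n1, n2) t1 t0 & T t1 /\ gen_tree d t1 = n1.
Proof.
move E: (l, SymS s n1 n2) => y H.
case: H E => l' s' m1 m2 u1 u2 Hd HT Hg [-> -> -> ->]; rewrite Hd.
  by exists u2.
by exists u1.
Qed.

Lemma spine_ext_cat T t0 ys1 ys2 t :
  spine_ext T t0 (ys1 ++ ys2) t <->
  exists2 t1, spine_ext T t0 ys1 t1 & spine_ext T t1 ys2 t.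
Proof.
elim: ys1 t0 => [|y ys IH] t0 /=; first by split=> [H|[t1 -> //]]; exists t0.
split=> [[t1 Hs /IH[t2 H1 H2]]|[t2 [t1 Hs H1] H2]]; first by exists t2; first exists t1.
by exists t1 => //; apply/IH; exists t2.
Qed.

Lemma spine_ext_rcons T t0 ys y t :
  spine_ext T t0 (rcons ys y) t <->
  exists2 t1, spine_ext T t0 ys t1 & spine_step T t1 y t.
Proof.
rewrite -cats1 spine_ext_cat.
by split=> [[t1 H1 [t2 H2 ->]]|[t1 H1 H2]]; exists t1 => //; exists t.
Qed.

Lemma attachE T w t : attach d T w t <->
  exists s' a n ys, w = (s', SymA a n) :: ys /\ spine_ext T (Leaf (s', a, n)) ys t.
Proof.
split=> [|[s' [a [n [ys [-> Hext]]]]]].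
  elim=> {w t} [s' a n|w s' s n1 n2 t1 t2 Hd _ IH HT Hg|
                 w s' s n1 n2 t1 t2 Hd HT Hg _ IH]; first by exists s', a, n, [::].
  - have [s0 [a [n [ys [-> He]]]]] := IH.
    exists s0, a, n, (rcons ys (s', SymS s n1 n2)); split=> //.
    by apply/spine_ext_rcons; exists t1; last exact: spine_step1.
  - have [s0 [a [n [ys [-> He]]]]] := IH.
    exists s0, a, n, (rcons ys (s', SymS s n1 n2)); split=> //.
    by apply/spine_ext_rcons; exists t2; last exact: spine_step2.
elim/last_ind: ys t Hext => [|ys y IH] t; first by move=> /= ->; apply: att_leaf.
case/spine_ext_rcons=> t1 /IH H1 H2; rewrite -rcons_cons.
by case: H2 H1 => s0 s n1 n2 t0 t2 Hd HT Hg H1; [apply: att_node1 | apply: att_node2].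
Qed.

Lemma attach_mono (T T' : xtree -> Prop) w t :
  (forall x, T x -> T' x) -> attach d T w t -> attach d T' w t.
Proof.
move=> HT; elim=> {w t} [s' a n||]; first exact: att_leaf.
  by move=> w s' s n1 n2 t1 t2 Hd _ H1 /HT H2 Hg; apply: att_node1.
by move=> w s' s n1 n2 t1 t2 Hd /HT H1 Hg _ H2; apply: att_node2.
Qed.

Lemma FL_closed (L : seq letter -> Prop) w t :
  L w -> attach d (FL d L) w t -> FL d L t.
Proof.
move=> Lw Ha F HF; apply: (HF _ _ Lw).
by apply: attach_mono Ha => x /(_ F HF).
Qed.

Lemma FL_eq (L L' : seq letter -> Prop) t :
  (forall w, L w <-> L' w) -> FL d L t -> FL d L' t.
Proof. by move=> HL H F HF; apply: H => w t' /HL; apply: HF. Qed.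

Lemma map_snd_next_word (s : seq sym) : map snd (next_word s) = s.
Proof. by case: s => // x s; apply: unzip2_zip; rewrite size_rcons size_map. Qed.

Definition erase0 (x : X0 N0 N1 Sig0 Sig2) : Sig0 := x.1.2.
Definition erase2 (x : X2 N0 N1 Sig0 Sig2) : Sig2 := x.1.1.2.

Local Notation erase := (relabel erase0 erase2).

Hypothesis dir_PL : forall n s a, P (PL n s a) -> d s = D1.
Hypothesis dir_PR : forall n s a, P (PR n s a) -> d s = D2.

Definition derivable_tree (t : xtree) : Prop :=
  exists2 n, gen_tree d t = inl n & Der n (erase t).

Lemma SGnt_spine_ext_DerB b g v ys t0 t : SGnt P (inr b) g v -> map snd ys = v ->
  spine_ext derivable_tree t0 ys t -> DerB b (erase t0) (erase t) /\ gen_tree d t = g.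
Proof.
move E: (inr b) => n H; elim: H b E ys t0 t => {n g v}.
- move=> n b1 b2 g w1 w2 HP _ IH1 _ IH2 b [->] ys t0 t.
  case/map_eq_cat=> ys1 [ys2 [-> Hys1 Hys2]] /spine_ext_cat[t1 E1 E2].
  have [D1 _] := IH1 _ erefl _ _ _ Hys1 E1; have [D2 G2] := IH2 _ erefl _ _ _ Hys2 E2.
  by split=> //; apply: derB_C HP D1 D2.
- move=> n s a g HP b [->] [|[l x] [|//]] //= t0 t [->] [t1 /spine_stepE + ->].
  rewrite (dir_PL HP) => -[t2 -> [[m Hg HD]]]; rewrite Hg => -[Em]; subst m.
  by split; [apply: derB_L HP HD | rewrite /= /gen2 /= (dir_PL HP)].
- move=> n s a g HP b [->] [|[l x] [|//]] //= t0 t [->] [t1 /spine_stepE + ->].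
  rewrite (dir_PR HP) => -[t2 -> [[m Hg HD]]]; rewrite Hg => -[Em]; subst m.
  by split; [apply: derB_R HP HD | rewrite /= /gen2 /= (dir_PR HP)].
Qed.

Lemma derivable_tree_attach w t :
  Next (SG P) w -> attach d derivable_tree w t -> derivable_tree t.
Proof.
move=> [s [HSG [_ ->]]] /attachE[l [a [n [ys [Ew He]]]]].
case: HSG Ew He => [m a' HP | m b a' v HP Hv].
  by move=> [<- <- <- <-] /= ->; exists m => //; apply: der_A.
rewrite next_word_cons => -[<- <- <- <-] He.
have [HD Hg] := SGnt_spine_ext_DerB Hv (map_snd_next_word v) He.
by exists m; last exact: der_B HP HD.
Qed.

Lemma FL_derivable (L : seq letter -> Prop) t :
  (forall w, L w -> Next (SG P) w) -> FL d L t -> derivable_tree t.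
Proof. by move=> HL; apply=> w t' /HL; apply: derivable_tree_attach. Qed.

Local Notation FLN := (FL d (Next (SG P))).

Definition lifts_Der (n : N0) (t : ttree) : Prop :=
  exists t', [/\ FLN t', gen_tree d t' = inl n & erase t' = t].

Definition lifts_DerB (b : N1) (r0 r : ttree) : Prop :=
  forall g, exists2 v, SGnt P (inr b) g v & forall ys t0, map snd ys = v ->
    erase t0 = r0 ->
    exists t1, [/\ spine_ext FLN t0 ys t1, erase t1 = r & gen_tree d t1 = g].

Lemma Der_lifts :
  (forall n t, Der n t -> lifts_Der n t) /\
  (forall b r0 r, DerB b r0 r -> lifts_DerB b r0 r).
Proof.
apply: Der_DerB_ind.
- move=> n a HP; exists (Leaf (None, a, inl n)); split=> //.
  apply: (@FL_closed _ [:: (None, SymA a (inl n))]); last exact: att_leaf.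
  by exists [:: SymA a (inl n)]; split=> //; apply: sg_A.
- move=> n b a t HP _ IH; have [v Hv Hlift] := IH (inl n).
  have [t1 [He <- Hg]] :=
    Hlift (next_word v) (Leaf (ohead v, a, inl n)) (map_snd_next_word v) erefl.
  exists t1; split=> //; apply: (@FL_closed _ (next_word (SymA a (inl n) :: v))).
    by exists (SymA a (inl n) :: v); split=> //; apply: sg_B HP Hv.
  by apply/attachE; exists (ohead v), a, (inl n), (next_word v); rewrite next_word_cons.
- move=> n b1 b2 t0 t1 t HP _ IH1 _ IH2 g.
  have [v1 Hv1 Hl1] := IH1 g; have [v2 Hv2 Hl2] := IH2 g.
  exists (v1 ++ v2); first exact: sg_C HP Hv1 Hv2.
  move=> ys u0 /map_eq_cat[ys1 [ys2 [-> Hys1 Hys2]]] Hu0.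
  have [u1 [E1 R1 _]] := Hl1 _ _ Hys1 Hu0; have [u2 [E2 R2 G2]] := Hl2 _ _ Hys2 R1.
  by exists u2; split=> //; apply/spine_ext_cat; exists u1.
- move=> n s a t0 t2 HP _ [t2' [HF Hg Hr]] g.
  exists [:: SymS s g (inl a)]; first exact: sg_L.
  move=> [|[l x] [|//]] //= u0 [->] Hu0; exists (Node (l, s, g, inl a) u0 t2').
  split; last by rewrite /= /gen2 /= (dir_PL HP).
    by exists (Node (l, s, g, inl a) u0 t2'); first exact: spine_step1 (dir_PL HP) HF Hg.
  by rewrite /= Hu0 Hr.
- move=> n s a t0 t2 HP _ [t2' [HF Hg Hr]] g.
  exists [:: SymS s (inl a) g]; first exact: sg_R.
  move=> [|[l x] [|//]] //= u0 [->] Hu0; exists (Node (l, s, inl a, g) t2' u0).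
  split; last by rewrite /= /gen2 /= (dir_PR HP).
    by exists (Node (l, s, inl a, g) t2' u0); first exact: spine_step2 (dir_PR HP) HF Hg.
  by rewrite /= Hu0 Hr.
Qed.

Lemma TG_FL_S S (L : seq letter -> Prop) t : (forall w, L w <-> Next (SG P) w) ->
  TG S P t <-> exists t', FL_S d S L t' /\ erase t' = t.
Proof.
move=> HL; rewrite TG_Der; split.
  move=> /Der_lifts.1[t' [HF Hg Hr]]; exists t'; do !split=> //.
  by apply: FL_eq HF => w; rewrite HL.
move=> [t' [[HF Hg] <-]]; have [n Hg' HD] := FL_derivable (fun w => (HL w).1) HF.
by move: Hg'; rewrite Hg => -[->].
Qed.

End SpineTrees.

Theorem corollary6p7 (N0 N1 Sig0 Sig2 : finType) (S : N0)
  (P : pred (production N0 N1 Sig0 Sig2)) (d : Sig2 -> dir) :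
  normalized_spine S P d ->
  let L1 := fun w : seq (letter N0 N1 Sig0 Sig2) =>
              Next (SG P) w /\ size w = 1 in
  exists A : mpda (letter N0 N1 Sig0 Sig2),
    pop_normalized A /\
    (forall w, mlang A w \/ L1 w <-> Next (SG P) w) /\
    exists (rho0 : X0 N0 N1 Sig0 Sig2 -> Sig0) (rho2 : X2 N0 N1 Sig0 Sig2 -> Sig2),
      forall t : tree Sig0 Sig2,
        TG S P t <->
        exists t', FL_S d S (fun w => mlang A w \/ L1 w) t' /\
                   relabel rho0 rho2 t' = t.
Proof.
move=> [_ [_ [dir_PL [dir_PR _]]]] L1.
have L_Next w : mlang (spine_mpda P) w \/ L1 w <-> Next (SG P) w.
  split=> [[/spine_mpda_Next | []] // | HN].
  by have [|/(Next_spine_mpda HN)] := eqVneq (size w) 1; [right | left].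
exists (spine_mpda P); split; first exact: spine_mpda_pop_normalized.
split=> //; exists (@erase0 _ _ _ _), (@erase2 _ _ _ _) => t.
exact: (TG_FL_S dir_PL dir_PR S t L_Next).
Qed.
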